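(* Consider problem (VP) under the standing assumptions at $\bar x\in Q_0$. Let $\bar x$ be a local Geoffrion properly efficient solution of (VP), let $u\in\mathcal{C}(\bar x)$, and suppose $L^2(Q;\bar x,u)\subset T^2(Q_0;\bar x,u)$. Then there is no $v\in X$ such that $f_i^{\circ}(\bar x,v)+f_i^{\circ\circ}(\bar x,u)\leqq0$ for all $i\in I(\bar x;u)$, $f_i^{\circ}(\bar x,v)+f_i^{\circ\circ}(\bar x,u)<0$ for at least one $i\in I(\bar x;u)$, and $g_j^{\circ}(\bar x,v)+g_j^{\circ\circ}(\bar x,u)\leqq0$ for all $j\in J(\bar x;u)$.
   Context: Standing setting: $X$ is a Banach space; $I=\{1,\dots,p\}$, $J=\{1,\dots,m\}$; $f_i,g_j\colon X\to\mathbb{R}$; (VP) minimizes $f=(f_1,\dots,f_p)$ over $Q_0:=\{x\in X: g_j(x)\leqq 0,\ j\in J\}$. $J(\bar x):=\{j\in J: g_j(\bar x)=0\}$. Standing assumptions: $f_i$ ($i\in I$), $g_j$ ($j\in J(\bar x)$) locally Lipschitz at $\bar x$; $g_j$ ($j\notin J(\bar x)$) continuous at $\bar x$. $F^{\circ}(\bar x,u):=\limsup_{x\to\bar x,\,t\downarrow0}\frac{F(x+tu)-F(x)}{t}$; $F^{\circ\circ}(\bar x,u):=\limsup_{t\downarrow0}\frac{F(\bar x+tu)-F(\bar x)-tF^{\circ}(\bar x,u)}{\frac12t^2}$. $I(\bar x;u):=\{i\in I: f_i^{\circ}(\bar x,u)=0\}$, $J(\bar x;u):=\{j\in J(\bar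 x): g_j^{\circ}(\bar x,u)=0\}$. Lexicographic order on $\mathbb{R}^2$: $a\leqq_{\rm lex}b$ iff $a_1<b_1$ or ($a_1=b_1$, $a_2\leqq b_2$). $F_i^2(\bar x;u,v):=(f_i^{\circ}(\bar x,u),\, f_i^{\circ}(\bar x,v)+f_i^{\circ\circ}(\bar x,u))$, $G_j^2(\bar x;u,v):=(g_j^{\circ}(\bar x,u),\, g_j^{\circ}(\bar x,v)+g_j^{\circ\circ}(\bar x,u))$. $Q:=Q_0\cap\{x: f_i(x)\leqq f_i(\bar x),\ i\in I\}$; $L^2(Q;\bar x,u):=\{v: F_i^2(\bar x;u,v)\leqq_{\rm lex}(0,0)\ \forall i\in I,\ G_j^2(\bar x;u,v)\leqq_{\rm lex}(0,0)\ \forall j\in J(\bar x)\}$. $T^2(\Omega;\bar x,u):=\{v: \exists t_k\downarrow0,\ \exists v^k\to v,\ \bar x+t_ku+\frac12t_k^2v^k\in\Omega\ \forall k\}$. Critical direction: $u$ with $f_i^{\circ}(\bar x,u)\leqq0$ for all $i$, $=0$ for some $i$, and $g_j^{\circ}(\bar x,u)\leqq0$ for all $j\in J(\bar x)$; $\mathcal{C}(\bar x)$ is the set of these. Local Geoffrion properly efficient solution: there is a neighborhood $U$ of $\bar x$ such that (a) no $x\in U\cap Q_0$ has $f(x)\leqq f(\bar x)$ componentwise with $f(x)\ne f(\bar x)$, and (b) there is $M>0$ such that for every $i\in I$ and every $x\in U\cap Q_0$ with $f_i(x)<f_i(\bar x)$ there exists $j\in I$ with $f_j(x)>f_j(\bar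 x)$ and $\frac{f_i(\bar x)-f_i(x)}{f_j(x)-f_j(\bar x)}\leqq M$. *)

From Stdlib Require Import Reals Lra Classical ClassicalEpsilon.
Open Scope R_scope.

Record Banach : Type := mkBanach {
  bcar :> Type;
  bzero : bcar;
  badd : bcar -> bcar -> bcar;
  bopp : bcar -> bcar;
  bscal : R -> bcar -> bcar;
  bnorm : bcar -> R;
  badd_assoc : forall x y z, badd x (badd y z) = badd (badd x y) z;
  badd_comm : forall x y, badd x y = badd y x;
  badd_zero : forall x, badd x bzero = x;
  badd_opp : forall x, badd x (bopp x) = bzero;
  bscal_one : forall x, bscal 1 x = x;
  bscal_assoc : forall a b x, bscal a (bscal b x) = bscal (a * b) x;
  bscal_distr_l : forall a x y, bscal a (badd x y) = badd (bscal a x) (bscal a y);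
  bscal_distr_r : forall a b x, bscal (a + b) x = badd (bscal a x) (bscal b x);
  bnorm_nonneg : forall x, 0 <= bnorm x;
  bnorm_eq0 : forall x, bnorm x = 0 -> x = bzero;
  bnorm_scal : forall a x, bnorm (bscal a x) = Rabs a * bnorm x;
  bnorm_triangle : forall x y, bnorm (badd x y) <= bnorm x + bnorm y;
  bcomplete : forall s : nat -> bcar,
    (forall eps, 0 < eps -> exists N, forall n m, (N <= n)%nat -> (N <= m)%nat ->
        bnorm (badd (s n) (bopp (s m))) < eps) ->
    exists l, forall eps, 0 < eps -> exists N, forall n, (N <= n)%nat ->
        bnorm (badd (s n) (bopp l)) < eps
}.

Arguments bzero {b0}.
Arguments badd {b0}.
Arguments bopp {b0}.
Arguments bscal {b0}.
Arguments bnorm {b0}.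

Definition bdist {X : Banach} (x y : X) : R := bnorm (badd x (bopp y)).

Definition seq_cv {X : Banach} (s : nat -> X) (l : X) : Prop :=
  forall eps, 0 < eps -> exists N, forall n, (N <= n)%nat -> bdist (s n) l < eps.

Inductive ERbar : Type := Fin (r : R) | PInf | MInf.

Definition ERle (a b : ERbar) : Prop :=
  match a, b with
  | MInf, _ => True
  | _, PInf => True
  | Fin x, Fin y => x <= y
  | _, _ => False
  end.
Definition ERlt (a b : ERbar) : Prop := ERle a b /\ a <> b.

(* addition; the undefined case (+oo) + (-oo) never occurs in the statement
   because the first summand is always a (finite) Clarke derivative *)
Definition ERplus (a b : ERbar) : ERbar :=
  match a, b with
  | Fin x, Fin y => Fin (x + y)
  | PInf, _ | _, PInf => PInf
  | _, _ => MInf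
  end.

Definition ER_real (a : ERbar) : R := match a with Fin x => x | _ => 0 end.

Definition ERsup (E : R -> Prop) : ERbar :=
  match excluded_middle_informative (exists x, E x) with
  | left ne =>
      match excluded_middle_informative (bound E) with
      | left bd => Fin (proj1_sig (completeness E bd ne))
      | right _ => PInf
      end
  | right _ => MInf
  end.

Definition ERinf (S : ERbar -> Prop) : ERbar :=
  match excluded_middle_informative (S MInf) with
  | left _ => MInf
  | right _ =>
    match ERsup (fun r => S (Fin (- r))) with
    | Fin r => Fin (- r)
    | PInf => MInf
    | MInf => PInf
    end
  end.

(* Clarke derivative: limsup_{x -> xb, t downarrow 0} (F(x+tu)-F(x))/t *)
Definition clarke {X : Banach} (F : X -> R) (xb u : X) : ERbar :=
  ERinf (fun e => exists d, 0 < d /\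
    e = ERsup (fun q => exists (x : X) (t : R),
          bdist x xb < d /\ 0 < t < d /\
          q = (F (badd x (bscal t u)) - F x) / t)).

(* second-order: limsup_{t downarrow 0} (F(xb+tu)-F(xb)-t F°(xb,u)) / (t^2/2) *)
Definition clarke2 {X : Banach} (F : X -> R) (xb u : X) : ERbar :=
  ERinf (fun e => exists d, 0 < d /\
    e = ERsup (fun q => exists t : R, 0 < t < d /\
          q = (F (badd xb (bscal t u)) - F xb - t * ER_real (clarke F xb u))
                / (t ^ 2 / 2))).

Definition loc_lipschitz {X : Banach} (F : X -> R) (xb : X) : Prop :=
  exists L d, 0 < d /\ forall x y : X, bdist x xb < d -> bdist y xb < d ->
    Rabs (F x - F y) <= L * bdist x y.

Definition cont_at {X : Banach} (F : X -> R) (xb : X) : Prop :=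
  forall eps, 0 < eps -> exists d, 0 < d /\
    forall x : X, bdist x xb < d -> Rabs (F x - F xb) < eps.

(* I = {0,...,p-1}, J = {0,...,m-1} (0-based) *)
Definition Q0 {X : Banach} (m : nat) (g : nat -> X -> R) (x : X) : Prop :=
  forall j, (j < m)%nat -> g j x <= 0.

Definition active {X : Banach} (m : nat) (g : nat -> X -> R) (xb : X) (j : nat) : Prop :=
  (j < m)%nat /\ g j xb = 0.

Definition Qset {X : Banach} (p m : nat) (f g : nat -> X -> R) (xb x : X) : Prop :=
  Q0 m g x /\ forall i, (i < p)%nat -> f i x <= f i xb.

Definition lex_le0 (a1 a2 : ERbar) : Prop :=
  ERlt a1 (Fin 0) \/ (a1 = Fin 0 /\ ERle a2 (Fin 0)).

Definition F2 {X : Banach} (F : X -> R) (xb u v : X) : ERbar * ERbar :=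
  (clarke F xb u, ERplus (clarke F xb v) (clarke2 F xb u)).

Definition L2 {X : Banach} (p m : nat) (f g : nat -> X -> R) (xb u v : X) : Prop :=
  (forall i, (i < p)%nat -> lex_le0 (fst (F2 (f i) xb u v)) (snd (F2 (f i) xb u v))) /\
  (forall j, active m g xb j -> lex_le0 (fst (F2 (g j) xb u v)) (snd (F2 (g j) xb u v))).

Definition T2 {X : Banach} (Om : X -> Prop) (xb u v : X) : Prop :=
  exists (t : nat -> R) (w : nat -> X),
    (forall k, 0 < t k) /\ Un_cv t 0 /\ seq_cv w v /\
    forall k, Om (badd (badd xb (bscal (t k) u)) (bscal (t k ^ 2 / 2) (w k))).

Definition critical {X : Banach} (p m : nat) (f g : nat -> X -> R) (xb u : X) : Prop :=
  (forall i, (i < p)%nat -> ERle (clarke (f i) xb u) (Fin 0)) /\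
  (exists i, (i < p)%nat /\ clarke (f i) xb u = Fin 0) /\
  (forall j, active m g xb j -> ERle (clarke (g j) xb u) (Fin 0)).

(* local Geoffrion proper efficiency, neighbourhood taken as a ball *)
Definition loc_geoffrion {X : Banach} (p m : nat) (f g : nat -> X -> R) (xb : X) : Prop :=
  exists d, 0 < d /\
  (~ exists x : X, bdist x xb < d /\ Q0 m g x /\
       (forall i, (i < p)%nat -> f i x <= f i xb) /\
       (exists i, (i < p)%nat /\ f i x <> f i xb)) /\
  (exists M, 0 < M /\
     forall i x, (i < p)%nat -> bdist x xb < d -> Q0 m g x -> f i x < f i xb ->
       exists j, (j < p)%nat /\ f j x > f j xb /\
         (f i xb - f i x) / (f j x - f j xb) <= M).

From Stdlib Require Import Reals Lra Lia Classical ClassicalEpsilon.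
Open Scope R_scope.

(* If such a [v] existed, the critical-direction conditions would put it in [L2],
   so by hypothesis it would be a second-order tangent direction to the feasible
   set: there are feasible points [x_k = xb + t_k u + t_k^2/2 w_k] with [t_k -> 0]
   and [w_k -> v].  Along them the objective with the strict inequality decreases
   by at least [c t_k^2] for some [c > 0], while every other objective either
   decreases (if its Clarke derivative along [u] is negative) or increases by less
   than any prescribed multiple of [t_k^2].  Choosing that multiple as [c / M]
   makes every trade-off ratio exceed the Geoffrion bound [M]. *)

Section VectorAlgebra.
Variable X : Banach.
Implicit Types x y a b v w : X.

Lemma badd_0l x : badd bzero x = x.
Proof. rewrite badd_comm; apply badd_zero. Qed.

Lemma bopp_unique a b : badd a b = bzero -> b = bopp a.
Proof.
  intro H. rewrite <- (badd_zero _ b), <- (badd_opp _ a), badd_assoc.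
  rewrite (badd_comm _ b a), H. apply badd_0l.
Qed.

Lemma bopp_add x y : bopp (badd x y) = badd (bopp x) (bopp y).
Proof.
  symmetry; apply bopp_unique. rewrite badd_assoc.
  rewrite (badd_comm _ x y), <- (badd_assoc _ y x (bopp x)), badd_opp, badd_zero.
  apply badd_opp.
Qed.

Lemma bscal_0l x : bscal 0 x = bzero.
Proof.
  assert (Hdouble : bscal 0 x = badd (bscal 0 x) (bscal 0 x)).
  { rewrite <- bscal_distr_r. f_equal. ring. }
  transitivity (badd (bscal 0 x) (badd (bscal 0 x) (bopp (bscal 0 x)))).
  - rewrite badd_opp, badd_zero. reflexivity.
  - rewrite badd_assoc, <- Hdouble. apply badd_opp.
Qed.

Lemma bscal_0r c : bscal c (@bzero X) = bzero.
Proof.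
  transitivity (bscal c (bscal 0 (@bzero X))).
  - rewrite bscal_0l. reflexivity.
  - rewrite bscal_assoc, Rmult_0_r. apply bscal_0l.
Qed.

Lemma bopp_scal c x : bopp (bscal c x) = bscal c (bopp x).
Proof. symmetry; apply bopp_unique. rewrite <- bscal_distr_l, badd_opp. apply bscal_0r. Qed.

Lemma bdist_refl x : bdist x x = 0.
Proof.
  unfold bdist. rewrite badd_opp, <- (bscal_0l (@bzero X)), bnorm_scal, Rabs_R0. ring.
Qed.

Lemma bdist_ge0 x y : 0 <= bdist x y.
Proof. apply bnorm_nonneg. Qed.

Lemma bdist_addl y a b : bdist (badd y a) (badd y b) = bnorm (badd a (bopp b)).
Proof.
  unfold bdist; rewrite bopp_add, (badd_comm _ y a).
  rewrite <- (badd_assoc _ a y (badd (bopp y) (bopp b))).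
  rewrite (badd_assoc _ y (bopp y) (bopp b)), badd_opp, badd_0l. reflexivity.
Qed.

Lemma bdist_add_self y a : bdist (badd y a) y = bnorm a.
Proof.
  unfold bdist. rewrite (badd_comm _ y a), <- badd_assoc, badd_opp, badd_zero. reflexivity.
Qed.

Lemma bnorm_le_dist w v : bnorm w <= bnorm v + bdist w v.
Proof.
  assert (Hw : w = badd v (badd w (bopp v))).
  { rewrite (badd_comm _ w (bopp v)), badd_assoc, badd_opp, badd_0l. reflexivity. }
  rewrite Hw at 1. apply bnorm_triangle.
Qed.

End VectorAlgebra.
Lemma ERlt_Fin x c : ERlt (Fin x) (Fin c) <-> x < c.
Proof.
  unfold ERlt; simpl; split.
  - intros [Hle Hne]. destruct (Req_dec x c) as [->|]; [congruence|lra].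
  - intro Hlt. split; [lra|]. intro H; injection H; lra.
Qed.

Lemma ERlt_MInf c : ERlt MInf (Fin c).
Proof. split; [exact I|discriminate]. Qed.

Lemma ERsup_lt E c : ERlt (ERsup E) (Fin c) -> forall q, E q -> q < c.
Proof.
  unfold ERsup.
  destruct (excluded_middle_informative (exists x, E x)) as [ne|nne].
  - destruct (excluded_middle_informative (bound E)) as [bd|nbd].
    + destruct (completeness E bd ne) as [r [Hr_ub Hr_lub]]; simpl.
      intros Hr q Hq. apply ERlt_Fin in Hr. specialize (Hr_ub q Hq). lra.
    + intros [[] _].
  - intros _ q Hq; exfalso; eauto.
Qed.

Lemma ERinf_lt S c : ERlt (ERinf S) (Fin c) -> exists e, S e /\ ERlt e (Fin c).
Proof.
  intro Hinf.
  destruct (classic (S MInf)) as [Hm|Hm]; [exists MInf; split; [exact Hm|apply ERlt_MInf]|].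
  apply NNPP; intro Hnone.
  assert (Hub : is_upper_bound (fun r => S (Fin (- r))) (- c)).
  { intros r Hr. destruct (Rle_dec r (- c)) as [|]; [assumption|].
    exfalso; apply Hnone. exists (Fin (- r)); split; [exact Hr|]. apply ERlt_Fin; lra. }
  revert Hinf; unfold ERinf, ERsup.
  destruct (excluded_middle_informative (S MInf)) as [|_]; [contradiction|].
  destruct (excluded_middle_informative (exists x, S (Fin (- x)))) as [ne|nne];
    [|intros [[] _]].
  destruct (excluded_middle_informative (bound (fun r => S (Fin (- r))))) as [bd|nbd];
    [|exfalso; apply nbd; exists (- c); exact Hub].
  destruct (completeness _ bd ne) as [r [Hr_ub Hr_lub]]; simpl.
  intro Hr. apply ERlt_Fin in Hr. specialize (Hr_lub _ Hub). lra.
Qed.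

Lemma ERplus_le_split a b s c : ERle (ERplus a b) (Fin s) -> s < c ->
  exists al be, al + be < c /\ ERlt a (Fin al) /\ ERlt b (Fin be).
Proof.
  intros Hab Hsc.
  destruct a as [x| |], b as [y| |]; simpl in Hab; try contradiction.
  - exists (x + (c - s) / 3), (y + (c - s) / 3). rewrite !ERlt_Fin. lra.
  - exists (x + 1), (c - x - 2). rewrite ERlt_Fin. split; [lra|split; [lra|apply ERlt_MInf]].
  - exists (c - y - 2), (y + 1). rewrite ERlt_Fin. split; [lra|split; [apply ERlt_MInf|lra]].
  - exists (c / 2 - 1), (c / 2 - 1). split; [lra|split; apply ERlt_MInf].
Qed.

Lemma ERlt_0_le_neg e : ERlt e (Fin 0) -> exists s, s < 0 /\ ERle e (Fin s).
Proof.
  destruct e as [r| |]; intro He.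
  - apply ERlt_Fin in He. exists r. simpl. split; lra.
  - destruct He as [[] _].
  - exists (-1). split; [lra|exact I].
Qed.

Lemma ERle_0_neq_lt_neg e : ERle e (Fin 0) -> e <> Fin 0 -> exists al, al < 0 /\ ERlt e (Fin al).
Proof.
  destruct e as [r| |]; simpl; intros Hle Hne.
  - assert (r <> 0) by (intros ->; auto). exists (r / 2). rewrite ERlt_Fin. lra.
  - contradiction.
  - exists (-1). split; [lra|apply ERlt_MInf].
Qed.

Lemma Rlt_mul_of_div a b c : 0 < b -> a / b < c -> a < c * b.
Proof. intros Hb H. replace a with (a / b * b) by (field; lra). nra. Qed.

Lemma clarke_lt_bound {X : Banach} (F : X -> R) xb u c :
  ERlt (clarke F xb u) (Fin c) -> exists d, 0 < d /\
    forall x s, bdist x xb < d -> 0 < s < d -> F (badd x (bscal s u)) - F x < c * s.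
Proof.
  intro H. apply ERinf_lt in H. destruct H as [e [[d [Hd ->]] He]].
  exists d; split; [exact Hd|]. intros x s Hx Hs.
  apply Rlt_mul_of_div; [lra|]. apply (ERsup_lt _ _ He). exists x, s; auto.
Qed.

Lemma clarke2_lt_bound {X : Banach} (F : X -> R) xb u c :
  clarke F xb u = Fin 0 -> ERlt (clarke2 F xb u) (Fin c) -> exists d, 0 < d /\
    forall t, 0 < t < d -> F (badd xb (bscal t u)) - F xb < c * (t ^ 2 / 2).
Proof.
  intros H0 H. apply ERinf_lt in H. destruct H as [e [[d [Hd ->]] He]].
  exists d; split; [exact Hd|]. intros t Ht.
  apply Rlt_mul_of_div; [simpl; nra|].
  replace (F (badd xb (bscal t u)) - F xb)
    with (F (badd xb (bscal t u)) - F xb - t * ER_real (clarke F xb u))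
    by (rewrite H0; simpl; ring).
  apply (ERsup_lt _ _ He). exists t; auto.
Qed.

Lemma loc_lipschitz_pos {X : Banach} (F : X -> R) xb : loc_lipschitz F xb ->
  exists L d, 0 < L /\ 0 < d /\ forall x y, bdist x xb < d -> bdist y xb < d ->
    F x - F y <= L * bdist x y.
Proof.
  intros [L [d [Hd H]]]. exists (Rabs L + 1), d. split; [pose proof (Rabs_pos L); lra|].
  split; [exact Hd|]. intros x y Hx Hy. specialize (H x y Hx Hy).
  pose proof (Rle_abs (F x - F y)). pose proof (Rle_abs L).
  pose proof (bdist_ge0 X x y). nra.
Qed.

Definition eventually (P : nat -> Prop) : Prop :=
  exists N, forall k, (N <= k)%nat -> P k.

Lemma eventually_and (P Q : nat -> Prop) :
  eventually P -> eventually Q -> eventually (fun k => P k /\ Q k).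
Proof.
  intros [N1 H1] [N2 H2]. exists (max N1 N2). intros k Hk. split; [apply H1|apply H2]; lia.
Qed.

Lemma eventually_mono (P Q : nat -> Prop) :
  (forall k, P k -> Q k) -> eventually P -> eventually Q.
Proof. intros HPQ [N H]. exists N. auto. Qed.

Lemma eventually_forall_lt p (P : nat -> nat -> Prop) :
  (forall j, (j < p)%nat -> eventually (P j)) ->
  eventually (fun k => forall j, (j < p)%nat -> P j k).
Proof.
  induction p as [|p IH]; intros H.
  - exists 0%nat. intros; lia.
  - destruct (eventually_and _ _ (IH (fun j Hj => H j ltac:(lia))) (H p ltac:(lia)))
      as [N HN].
    exists N. intros k Hk j Hj. destruct (HN k Hk) as [Hlt Hp].
    destruct (Nat.eq_dec j p) as [->|]; [exact Hp|apply Hlt; lia].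
Qed.

Definition curve2 {X : Banach} (xb u : X) (t : R) (w : X) : X :=
  badd (badd xb (bscal t u)) (bscal (t ^ 2 / 2) w).

Lemma curve2_dist {X : Banach} (xb u w : X) t : 0 <= t <= 1 ->
  bdist (curve2 xb u t w) xb <= t * (bnorm u + bnorm w).
Proof.
  intro Ht. unfold curve2. rewrite <- badd_assoc, bdist_add_self.
  eapply Rle_trans; [apply bnorm_triangle|]. rewrite !bnorm_scal.
  assert (Hs : 0 <= t ^ 2 / 2 <= t) by (simpl; nra).
  rewrite (Rabs_pos_eq t), (Rabs_pos_eq (t ^ 2 / 2)) by lra.
  pose proof (bnorm_nonneg _ w).
  assert (t ^ 2 / 2 * bnorm w <= t * bnorm w) by (apply Rmult_le_compat_r; lra).
  lra.
Qed.

Lemma curve2_dist_curve2 {X : Banach} (xb u w w' : X) t :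
  bdist (curve2 xb u t w) (curve2 xb u t w') = t ^ 2 / 2 * bdist w w'.
Proof.
  unfold curve2. rewrite bdist_addl, bopp_scal, <- bscal_distr_l, bnorm_scal.
  rewrite Rabs_pos_eq; [reflexivity|simpl; nra].
Qed.

Lemma seq_cv_const {X : Banach} (v : X) : seq_cv (fun _ => v) v.
Proof. intros eps Heps. exists 0%nat. intros. rewrite bdist_refl. exact Heps. Qed.

Lemma half_sq_pos r : 0 < r -> 0 < r ^ 2 / 2.
Proof. intro Hr. simpl. nra. Qed.

Section AlongTangentSequence.
Variables (X : Banach) (xb u v : X) (t : nat -> R) (w : nat -> X).
Hypotheses (t_pos : forall k, 0 < t k) (t_cv : Un_cv t 0) (w_cv : seq_cv w v).

Let x k := curve2 xb u (t k) (w k).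

Lemma eventually_t_lt d : 0 < d -> eventually (fun k => t k < d).
Proof.
  intro Hd. destruct (t_cv d Hd) as [N HN]. exists N. intros k Hk.
  specialize (HN k Hk). unfold R_dist in HN. rewrite Rminus_0_r in HN.
  apply Rabs_def2 in HN. lra.
Qed.

Lemma eventually_t_mul_lt K d : 0 < K -> 0 < d -> eventually (fun k => t k * K < d).
Proof.
  intros HK Hd. apply (eventually_mono (fun k => t k < d / K)).
  - intros k Hk. apply (Rmult_lt_compat_r K) in Hk; [|exact HK].
    replace (d / K * K) with d in Hk by (field; lra). exact Hk.
  - apply eventually_t_lt, Rdiv_lt_0_compat; assumption.
Qed.

Lemma eventually_base_near d : 0 < d ->
  eventually (fun k => bdist (badd xb (bscal (t k) u)) xb < d).
Proof.
  intro Hd. pose proof (bnorm_nonneg _ u).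
  apply (eventually_mono (fun k => t k * (bnorm u + 1) < d)).
  - intros k Hk. specialize (t_pos k).
    rewrite bdist_add_self, bnorm_scal, Rabs_pos_eq; nra.
  - apply eventually_t_mul_lt; lra.
Qed.

Lemma eventually_curve2_near (w' : nat -> X) d : seq_cv w' v -> 0 < d ->
  eventually (fun k => bdist (curve2 xb u (t k) (w' k)) xb < d).
Proof.
  intros Hw' Hd. pose proof (bnorm_nonneg _ u). pose proof (bnorm_nonneg _ v).
  apply (eventually_mono (fun k => (t k < 1 /\ t k * (bnorm u + bnorm v + 1) < d)
                                   /\ bdist (w' k) v < 1)).
  - intros k [[Ht1 HtK] Hwk]. specialize (t_pos k).
    pose proof (curve2_dist xb u (w' k) (t k) ltac:(lra)).
    pose proof (bnorm_le_dist _ (w' k) v).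
    assert (t k * bnorm (w' k) <= t k * (bnorm v + 1)) by (apply Rmult_le_compat_l; lra).
    lra.
  - apply eventually_and; [apply eventually_and|exact (Hw' 1 Rlt_0_1)].
    + apply eventually_t_lt; lra.
    + apply eventually_t_mul_lt; lra.
Qed.

Lemma eventually_first_order_descent (F : X -> R) al :
  loc_lipschitz F xb -> al < 0 -> ERlt (clarke F xb u) (Fin al) ->
  eventually (fun k => F (x k) - F xb < 0).
Proof.
  intros Hlip Hal Hcl.
  destruct (loc_lipschitz_pos F xb Hlip) as [L [dL [HL [HdL HF]]]].
  destruct (clarke_lt_bound F xb u al Hcl) as [d [Hd Hd_bound]].
  pose proof (bnorm_nonneg _ v).
  apply (eventually_mono (fun k =>
    ((t k < 1 /\ t k < d) /\ t k * (L * (bnorm v + 1)) < - al) /\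
    (bdist (x k) xb < dL /\ bdist (badd xb (bscal (t k) u)) xb < dL) /\ bdist (w k) v < 1)).
  - intros k [[[Ht1 Htd] HtL] [[Hx Hyk] Hwk]]. specialize (t_pos k).
    set (y := badd xb (bscal (t k) u)).
    assert (Hy : bdist y xb = t k * bnorm u)
      by (unfold y; rewrite bdist_add_self, bnorm_scal, Rabs_pos_eq; lra).
    assert (Hfirst : F y - F xb < al * t k).
    { unfold y. apply Hd_bound; [rewrite bdist_refl|split]; lra. }
    assert (Hxy : bdist (x k) y = t k ^ 2 / 2 * bnorm (w k)).
    { unfold x, curve2. fold y.
      rewrite bdist_add_self, bnorm_scal, Rabs_pos_eq; [reflexivity|simpl; nra]. }
    assert (Hsecond : F (x k) - F y <= L * (t k ^ 2 / 2 * bnorm (w k))).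
    { rewrite <- Hxy. apply HF; assumption. }
    pose proof (bnorm_le_dist _ (w k) v).
    assert (L * (t k ^ 2 / 2 * bnorm (w k)) <= t k / 2 * (t k * (L * (bnorm v + 1)))).
    { replace (t k / 2 * (t k * (L * (bnorm v + 1))))
        with (L * (t k ^ 2 / 2 * (bnorm v + 1))) by field.
      apply Rmult_le_compat_l; [lra|]. apply Rmult_le_compat_l; [simpl; nra|lra]. }
    assert (t k / 2 * (t k * (L * (bnorm v + 1))) < t k / 2 * - al)
      by (apply Rmult_lt_compat_l; lra).
    nra.
  - repeat apply eventually_and.
    + apply eventually_t_lt; lra.
    + apply eventually_t_lt; lra.
    + apply eventually_t_mul_lt; nra.
    + apply eventually_curve2_near; assumption.
    + apply eventually_base_near; assumption.
    + exact (w_cv 1 Rlt_0_1).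
Qed.

Lemma eventually_second_order_descent (F : X -> R) s c :
  loc_lipschitz F xb -> clarke F xb u = Fin 0 ->
  ERle (ERplus (clarke F xb v) (clarke2 F xb u)) (Fin s) -> s < c ->
  eventually (fun k => F (x k) - F xb < c * (t k ^ 2 / 2)).
Proof.
  intros Hlip Hcl0 Hsum Hsc.
  destruct (loc_lipschitz_pos F xb Hlip) as [L [dL [HL [HdL HF]]]].
  destruct (ERplus_le_split _ _ s ((s + c) / 2) Hsum ltac:(lra))
    as [al [be [Hab [Hal Hbe]]]].
  destruct (clarke_lt_bound F xb v al Hal) as [d1 [Hd1 Hd1_bound]].
  destruct (clarke2_lt_bound F xb u be Hcl0 Hbe) as [d2 [Hd2 Hd2_bound]].
  set (gap := (c - s) / 2).
  apply (eventually_mono (fun k =>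
    ((t k < 1 /\ t k < d1) /\ t k < d2) /\
    ((bdist (x k) xb < dL /\ bdist (curve2 xb u (t k) v) xb < dL) /\
     bdist (badd xb (bscal (t k) u)) xb < d1) /\
    L * bdist (w k) v < gap)).
  - intros k [[[Ht1 Htd1] Htd2] [[[Hx Hz] Hy] Hwk]]. specialize (t_pos k).
    set (y := badd xb (bscal (t k) u)) in *.
    set (s' := t k ^ 2 / 2).
    assert (Hs' : 0 < s' < t k) by (unfold s'; simpl; nra).
    (* the increment is split at [y = xb + t u] and [z = y + s' v]: the first
       piece is controlled by [clarke2 F xb u], the second by [clarke F xb v] at
       the moving base point [y], the last by the Lipschitz constant *)
    assert (Hyx : F y - F xb < be * s') by (apply Hd2_bound; lra).
    assert (Hzy : F (curve2 xb u (t k) v) - F y < al * s') by (apply Hd1_bound; lra).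
    assert (Hxz : F (x k) - F (curve2 xb u (t k) v) <= L * (s' * bdist (w k) v)).
    { unfold s'. rewrite <- (curve2_dist_curve2 xb u). apply HF; assumption. }
    assert (L * (s' * bdist (w k) v) <= s' * gap) by nra.
    unfold gap in *. nra.
  - repeat apply eventually_and.
    + apply eventually_t_lt; lra.
    + apply eventually_t_lt; lra.
    + apply eventually_t_lt; lra.
    + apply eventually_curve2_near; assumption.
    + apply eventually_curve2_near; [apply seq_cv_const|assumption].
    + apply eventually_base_near; assumption.
    + apply (eventually_mono (fun k => bdist (w k) v < gap / L)).
      * intros k Hk. apply (Rmult_lt_compat_l L) in Hk; [|exact HL].
        replace (L * (gap / L)) with gap in Hk by (field; lra). exact Hk.
      * apply w_cv, Rdiv_lt_0_compat; unfold gap; lra.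
Qed.

Lemma eventually_descent (F : X -> R) c :
  loc_lipschitz F xb -> ERle (clarke F xb u) (Fin 0) ->
  (clarke F xb u = Fin 0 -> ERle (ERplus (clarke F xb v) (clarke2 F xb u)) (Fin 0)) ->
  0 < c -> eventually (fun k => F (x k) - F xb < c * (t k ^ 2 / 2)).
Proof.
  intros Hlip Hcl Hsum Hc.
  destruct (classic (clarke F xb u = Fin 0)) as [H0|Hneg].
  - exact (eventually_second_order_descent F 0 c Hlip H0 (Hsum H0) Hc).
  - destruct (ERle_0_neq_lt_neg _ Hcl Hneg) as [al [Hal Hcl_al]].
    apply (eventually_mono (fun k => F (x k) - F xb < 0));
      [|exact (eventually_first_order_descent F al Hlip Hal Hcl_al)].
    intros k Hk. pose proof (half_sq_pos (t k) (t_pos k)). nra.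
Qed.

Lemma eventually_strict_descent (F : X -> R) :
  loc_lipschitz F xb -> clarke F xb u = Fin 0 ->
  ERlt (ERplus (clarke F xb v) (clarke2 F xb u)) (Fin 0) ->
  exists c, c < 0 /\ eventually (fun k => F (x k) - F xb < c * (t k ^ 2 / 2)).
Proof.
  intros Hlip Hcl0 Hsum.
  destruct (ERlt_0_le_neg _ Hsum) as [s [Hs Hsum_s]].
  exists (s / 2). split; [lra|].
  apply (eventually_second_order_descent F s); [assumption..|lra].
Qed.

End AlongTangentSequence.

Lemma lex_le0_intro a b :
  ERle a (Fin 0) -> (a = Fin 0 -> ERle b (Fin 0)) -> lex_le0 a b.
Proof.
  intros Ha Hb. destruct (classic (a = Fin 0)) as [H0|Hne].
  - right; auto.
  - left; split; assumption.
Qed.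

Lemma L2_of_critical {X : Banach} p m (f g : nat -> X -> R) xb u v :
  critical p m f g xb u ->
  (forall i, (i < p)%nat -> clarke (f i) xb u = Fin 0 ->
     ERle (ERplus (clarke (f i) xb v) (clarke2 (f i) xb u)) (Fin 0)) ->
  (forall j, active m g xb j -> clarke (g j) xb u = Fin 0 ->
     ERle (ERplus (clarke (g j) xb v) (clarke2 (g j) xb u)) (Fin 0)) ->
  L2 p m f g xb u v.
Proof.
  intros [Hu_obj [_ Hu_con]] Hv_obj Hv_con.
  split; [intros i Hi|intros j Hj]; apply lex_le0_intro; simpl; auto.
Qed.

Lemma ratio_gt_bound a b M : 0 < b -> M * b < a -> ~ a / b <= M.
Proof.
  intros Hb Hab Hle. apply (Rmult_le_compat_r b) in Hle; [|lra].
  replace (a / b * b) with a in Hle by (field; lra). lra.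
Qed.

Theorem corollary5p2 (X : Banach) (p m : nat) (f g : nat -> X -> R) (xb u : X)
  (Hf : forall i, (i < p)%nat -> loc_lipschitz (f i) xb)
  (Hga : forall j, active m g xb j -> loc_lipschitz (g j) xb)
  (Hgi : forall j, (j < m)%nat -> g j xb <> 0 -> cont_at (g j) xb)
  (Hxb : Q0 m g xb)
  (Hgeo : loc_geoffrion p m f g xb)
  (Hu : critical p m f g xb u)
  (HL : forall v, L2 p m f g xb u v -> T2 (Q0 m g) xb u v) :
  ~ exists v : X,
      (forall i, (i < p)%nat -> clarke (f i) xb u = Fin 0 ->
         ERle (ERplus (clarke (f i) xb v) (clarke2 (f i) xb u)) (Fin 0)) /\
      (exists i, (i < p)%nat /\ clarke (f i) xb u = Fin 0 /\
         ERlt (ERplus (clarke (f i) xb v) (clarke2 (f i) xb u)) (Fin 0)) /\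
      (forall j, active m g xb j -> clarke (g j) xb u = Fin 0 ->
         ERle (ERplus (clarke (g j) xb v) (clarke2 (g j) xb u)) (Fin 0)).
Proof.
  intros [v [Hv_obj [[i0 [Hi0 [Hi0_cl Hi0_lt]]] Hv_con]]].
  destruct (HL v (L2_of_critical p m f g xb u v Hu Hv_obj Hv_con))
    as [t [w [Ht_pos [Ht_cv [Hw_cv HQ0]]]]].
  destruct Hgeo as [d [Hd [_ [M [HM Hratio]]]]].
  destruct Hu as [Hu_obj _].
  destruct (eventually_strict_descent X xb u v t w Ht_pos Ht_cv Hw_cv (f i0)
              (Hf i0 Hi0) Hi0_cl Hi0_lt) as [c [Hc Hgain]].
  assert (Hloss : eventually (fun k => forall j, (j < p)%nat ->
            f j (curve2 xb u (t k) (w k)) - f j xb < - c / M * (t k ^ 2 / 2))).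
  { apply eventually_forall_lt. intros j Hj.
    apply (eventually_descent X xb u v t w Ht_pos Ht_cv Hw_cv); auto.
    apply Rdiv_lt_0_compat; lra. }
  destruct (eventually_and _ _ (eventually_and _ _ Hgain Hloss)
              (eventually_curve2_near X xb u v t Ht_pos Ht_cv w d Hw_cv Hd))
    as [N HN].
  destruct (HN N (le_n N)) as [[Hgain_N Hloss_N] Hnear].
  set (x := curve2 xb u (t N) (w N)) in *.
  pose proof (half_sq_pos (t N) (Ht_pos N)) as Hs.
  destruct (Hratio i0 x Hi0 Hnear (HQ0 N)) as [j [Hj [Hincr Hj_ratio]]]; [nra|].
  apply (ratio_gt_bound (f i0 xb - f i0 x) (f j x - f j xb) M); [lra| |exact Hj_ratio].
  specialize (Hloss_N j Hj).
  apply (Rmult_lt_compat_l M) in Hloss_N; [|exact HM].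
  replace (M * (- c / M * (t N ^ 2 / 2))) with (- c * (t N ^ 2 / 2)) in Hloss_N
    by (field; lra).
  lra.
Qed.
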